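(* Let $\Gamma=(-a_1,\dots,-a_k)$ be a linear chain with integers $a_i\ge 2$. Then $\Gamma\in\mathcal G_r$ if and only if there are relatively prime integers $p>q>0$ with $a_1-\cfrac{1}{a_2-\cfrac{1}{\ddots-\cfrac{1}{a_k}}}=\dfrac{p^2}{pq-1}$.
   Context: $\mathcal G_r$ is the smallest set of linear chains (written as the sequence of vertex decorations along the chain) which contains the one-vertex chain $(-4)$ and which, whenever it contains $(-a_1,\dots,-a_k)$, also contains $(-2,-a_1,\dots,-a_{k-1},-a_k-1)$ and $(-a_1-1,-a_2,\dots,-a_k,-2)$. *)

From HB Require Import structures.
From mathcomp Require Import all_boot all_order all_algebra.
Set Implicit Arguments. Unset Strict Implicit. Unset Printing Implicit Defensive.
Import Order.TTheory GRing.Theory Num.Theory.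

(* A linear chain (-a_1,...,-a_k) is represented by the sequence [:: a_1; ...; a_k]
   of the (positive) absolute values of its vertex decorations. *)

Inductive Gr : seq nat -> Prop :=
| Gr_base : Gr [:: 4]
| Gr_left : forall (s : seq nat) (a : nat),
    Gr (rcons s a) -> Gr (2 :: rcons s a.+1)
| Gr_right : forall (a : nat) (s : seq nat),
    Gr (a :: s) -> Gr (rcons (a.+1 :: s) 2).

(* Hirzebruch–Jung continued fraction [a_1,...,a_k]^- = a_1 - 1/(a_2 - 1/(... - 1/a_k)),
   computed in the rationals (the empty chain is given the junk value 0). *)
Fixpoint hjcf (s : seq nat) : rat :=
  match s with
  | [::] => 0
  | [:: a] => a%:R
  | a :: t => a%:R - (hjcf t)^-1
  end.

(* Follow a chain through the integer matrix
   M(a_1) ... M(a_k) diag(1, -1), where M(a) = [[a, -1], [1, 0]]; its first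
   column is (numerator, denominator) of the continued fraction. For coprime
   p > q > 0 let W(p, q) = [[p^2, p(p-q) - 1], [pq - 1, q(p-q) - 1]]. The two
   operations generating G_r send a chain with matrix W(p, q) to one with
   matrix W(2p - q, p), resp. W(p + q, q), and preserve coprimality; since
   (-4) has matrix W(2, 1), every chain of G_r has fraction p^2/(pq - 1).
   Conversely, (p, q) descends to (2, 1) by the inverse moves
   (p, q) -> (q, 2q - p) if 2q > p and (p, q) -> (p - q, q) if 2q < p, so
   reversing the descent builds a chain of G_r with fraction p^2/(pq - 1);
   as continued fractions with entries >= 2 determine their chain, it is the
   given one. *)
From HB Require Import structures.
From mathcomp Require Import all_boot all_order all_algebra.
From mathcomp Require Import zify ring lra.
Set Implicit Arguments. Unset Strict Implicit. Unset Printing Implicit Defensive.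
Import Order.TTheory GRing.Theory Num.Theory.
Local Open Scope ring_scope.

Lemma hjcf_cons2 a b s : hjcf [:: a, b & s] = a%:R - (hjcf (b :: s))^-1.
Proof. by []. Qed.

Lemma hjcf_bounds a s : all (leq 2) (a :: s) ->
  a%:R - 1 < hjcf (a :: s) <= a%:R /\ (s != [::] -> hjcf (a :: s) < a%:R).
Proof.
elim: s a => [|b s IH] a /andP [_ s_ge2].
  by split => //; rewrite /= lexx andbT ltrBlDr ltrDl.
have [/andP [tail_gt _] _] := IH b s_ge2.
have b_ge2 : (2%:R : rat) <= b%:R by rewrite ler_nat; case/andP: s_ge2.
have inv_tail_gt0 : 0 < (hjcf (b :: s))^-1 by rewrite invr_gt0; lra.
have inv_tail_lt1 : (hjcf (b :: s))^-1 < 1 by rewrite invf_lt1; lra.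
by rewrite hjcf_cons2; split => [|_]; [apply/andP; split|]; lra.
Qed.

Lemma hjcf_inj s t : s != [::] -> t != [::] ->
  all (leq 2) s -> all (leq 2) t -> hjcf s = hjcf t -> s = t.
Proof.
elim: s t => [|a s IH] // [|b t] // _ _ as_ge2 bt_ge2 E.
have [/andP [a_lo a_hi] a_lt] := hjcf_bounds as_ge2.
have [/andP [b_lo b_hi] b_lt] := hjcf_bounds bt_ge2.
have a_eq_b : a = b.
  apply/eqP; rewrite eqn_leq -(ltnS a b) -(ltnS b a) -!(ltr_nat rat) -!natr1.
  by apply/andP; split; lra.
subst b; congr cons.
case: s t IH as_ge2 bt_ge2 E a_lt b_lt {a_lo a_hi b_lo b_hi}
  => [|c s] [|d t] IH /andP [_ s_ge2] /andP [_ t_ge2] E a_lt b_lt //.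
- by move: (b_lt isT); rewrite -E ltxx.
- by move: (a_lt isT); rewrite E ltxx.
apply: IH => //; move: E; rewrite !hjcf_cons2.
by move/addrI/oppr_inj/invr_inj.
Qed.

(* Entries of a 2x2 integer matrix, row by row; [hjmx s] is the matrix
   M(a_1) ... M(a_k) diag(1, -1) of the header. *)
Record mx22 := Mx22 {m11 : int; m12 : int; m21 : int; m22 : int}.

Fixpoint hjmx (s : seq nat) : mx22 :=
  match s with
  | [::] => Mx22 1 0 0 (-1)
  | a :: t => let M := hjmx t in
      Mx22 (a%:Z * m11 M - m21 M) (a%:Z * m12 M - m22 M) (m11 M) (m12 M)
  end.

Lemma hjmx_cons a s : let M := hjmx s in
  hjmx (a :: s) = Mx22 (a%:Z * m11 M - m21 M) (a%:Z * m12 M - m22 M) (m11 M) (m12 M).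
Proof. by []. Qed.

Lemma hjmx_rcons s a : let M := hjmx s in
  hjmx (rcons s a) = Mx22 (a%:Z * m11 M - m12 M) (m11 M) (a%:Z * m21 M - m22 M) (m21 M).
Proof.
by elim: s => [|b s IH] /=; [|rewrite IH /=]; congr Mx22; ring.
Qed.

Lemma hjmx_col1_bounds s : all (leq 2) s -> 0 <= m21 (hjmx s) < m11 (hjmx s).
Proof.
elim: s => [|a s IH] //= /andP [a_ge2 s_ge2].
have /andP [den_ge0 den_lt_num] := IH s_ge2.
have a_ge2' : 2%:Z <= a%:Z by rewrite lez_nat.
apply/andP; split; nia.
Qed.

Lemma hjcf_hjmx s : s != [::] -> all (leq 2) s ->
  hjcf s = (m11 (hjmx s))%:~R / (m21 (hjmx s))%:~R.
Proof.
elim: s => [|a [|b s] IH] // _; first by rewrite /= mulr1 subr0 divr1.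
case/andP=> _ s_ge2.
have /andP [den_ge0 den_lt_num] := @hjmx_col1_bounds (b :: s) s_ge2.
rewrite hjcf_cons2 IH // invf_div (hjmx_cons a).
move: (hjmx (b :: s)) den_ge0 den_lt_num => [n x d y] /= den_ge0 den_lt_num.
have num_neq0 : (n%:~R : rat) != 0 by rewrite intr_eq0 gt_eqF // (le_lt_trans den_ge0).
by rewrite intrB intrM; field.
Qed.

Definition wahl_mx (p q : int) : mx22 :=
  Mx22 (p ^+ 2) (p * (p - q) - 1) (p * q - 1) (q * (p - q) - 1).

Lemma wahl_mx_Gr_left s a (p q : int) : hjmx (rcons s a) = wahl_mx p q ->
  hjmx (2 :: rcons s a.+1) = wahl_mx (2 * p - q) p.
Proof.
rewrite hjmx_rcons /wahl_mx => -[E11 E12 E21 E22] /=; rewrite hjmx_rcons /=.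
have -> : m12 (hjmx s) = a%:Z * m11 (hjmx s) - p ^+ 2 by rewrite -E11; ring.
have -> : m22 (hjmx s) = a%:Z * m21 (hjmx s) - (p * q - 1) by rewrite -E21; ring.
by rewrite E12 E22 -addn1 PoszD; congr Mx22; ring.
Qed.

Lemma wahl_mx_Gr_right a s (p q : int) : hjmx (a :: s) = wahl_mx p q ->
  hjmx (rcons (a.+1 :: s) 2) = wahl_mx (p + q) q.
Proof.
rewrite /wahl_mx /= => -[E11 E12 E21 E22]; rewrite hjmx_rcons /=.
have -> : m21 (hjmx s) = a%:Z * m11 (hjmx s) - p ^+ 2 by rewrite -E11; ring.
have -> : m22 (hjmx s) = a%:Z * m12 (hjmx s) - (p * (p - q) - 1) by rewrite -E12; ring.
by rewrite E21 E22 -addn1 PoszD; congr Mx22; ring.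
Qed.

Lemma hjcf_wahl_mx s (p q : nat) : s != [::] -> all (leq 2) s ->
  (0 < q < p)%N -> hjmx s = wahl_mx p q -> hjcf s = (p ^ 2)%:R / (p * q - 1)%:R.
Proof.
move=> s_neq0 s_ge2 /andP [q_gt0 q_lt_p] E; rewrite hjcf_hjmx // E /=.
have pq_gt0 : (0 < p * q)%N by rewrite muln_gt0 q_gt0 (ltn_trans q_gt0 q_lt_p).
by rewrite -PoszM subzn.
Qed.

Lemma coprime_Gr_left p q : (q <= p)%N -> coprime (2 * p - q)%N p = coprime p q.
Proof.
move=> /subnKC p_eq; rewrite -{}p_eq; set r := (p - q)%N.
have -> : (2 * (q + r) - q = q + r + r)%N by lia.
by rewrite /coprime gcdnC (gcdnDl (q + r) r) gcdnC gcdnDr [in RHS]gcdnC gcdnDl gcdnC.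
Qed.

Lemma coprime_Gr_right p q : coprime (p + q)%N q = coprime p q.
Proof. by rewrite /coprime gcdnC gcdnDr gcdnC. Qed.

Lemma Gr_neq_nil s : Gr s -> s != [::].
Proof. by case=> // a t _; rewrite -size_eq0 size_rcons. Qed.

Lemma Gr_all_ge2 s : Gr s -> all (leq 2) s.
Proof.
by elim=> // [t a | a t] _; rewrite /= !all_rcons => /andP [a_ge2 ->];
  rewrite ?andbT ltnW.
Qed.

Lemma Gr_wahl_mx s : Gr s ->
  exists p q : nat, [/\ (0 < q < p)%N, coprime p q & hjmx s = wahl_mx p q].
Proof.
elim=> [|t a _ [p [q [/andP [q_gt0 q_lt_p] co_pq E]]]
        |a t _ [p [q [/andP [q_gt0 q_lt_p] co_pq E]]]].
- by exists 2%N, 1%N.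
- exists (2 * p - q)%N, p; rewrite coprime_Gr_left ?(ltnW q_lt_p) //.
  by split; [lia | | rewrite (wahl_mx_Gr_left E); congr wahl_mx; lia].
- exists (p + q)%N, q; rewrite coprime_Gr_right PoszD.
  by split; [lia | | exact: wahl_mx_Gr_right E].
Qed.

Lemma wahl_mx_Gr (p q : nat) : (0 < q < p)%N -> coprime p q ->
  exists2 s, Gr s & hjmx s = wahl_mx p q.
Proof.
elim/ltn_ind: p q => p IH q /andP [q_gt0 q_lt_p] co_pq.
case: (ltngtP (2 * q) p) => [two_q_lt_p | two_q_gt_p | two_q_eq_p].
- have co' : coprime (p - q) q by rewrite -coprime_Gr_right subnK // ltnW.
  have [[|a t] Gr_s E] := IH (p - q)%N ltac:(lia) q ltac:(lia) co'.
    by have := Gr_neq_nil Gr_s.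
  exists (rcons (a.+1 :: t) 2); first exact: Gr_right.
  by rewrite (wahl_mx_Gr_right E) -PoszD subnK // ltnW.
- have co' : coprime q (2 * q - p).
    by rewrite -coprime_Gr_left; [rewrite subKn // ltnW | lia].
  have [s Gr_s E] := IH q q_lt_p (2 * q - p)%N ltac:(lia) co'.
  case/lastP: s Gr_s E => [|t a] Gr_s E; first by have := Gr_neq_nil Gr_s.
  exists (2 :: rcons t a.+1); first exact: Gr_left.
  by rewrite (wahl_mx_Gr_left E); congr wahl_mx; lia.
- have q_eq1 : q = 1%N.
    by apply/eqP; move: co_pq; rewrite -two_q_eq_p mul2n -addnn /coprime gcdnC gcdnDl gcdnn.
  by subst; exists [:: 4%N]; first exact: Gr_base.
Qed.

Theorem proposition4p1 (s : seq nat) :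
  s != [::] -> all (fun a => (2 <= a)%N) s ->
  (Gr s <->
   exists p q : nat, [/\ (0 < q)%N, (q < p)%N, coprime p q &
     hjcf s = (p ^ 2)%:R / (p * q - 1)%:R]).
Proof.
move=> s_neq0 s_ge2; split=> [Gr_s | [p [q [q_gt0 q_lt_p co_pq cf_s]]]].
- have [p [q [qp co_pq E]]] := Gr_wahl_mx Gr_s.
  case/andP: (qp) => q_gt0 q_lt_p.
  by exists p, q; split => //; exact: hjcf_wahl_mx E.
- have qp : (0 < q < p)%N by rewrite q_gt0.
  have [s0 Gr_s0 E] := wahl_mx_Gr qp co_pq.
  have cf_s0 := hjcf_wahl_mx (Gr_neq_nil Gr_s0) (Gr_all_ge2 Gr_s0) qp E.
  by rewrite (hjcf_inj s_neq0 (Gr_neq_nil Gr_s0) s_ge2 (Gr_all_ge2 Gr_s0)) // cf_s cf_s0.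
Qed.
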